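(* There exists a finite graph (without loops or parallel edges) which is not the dual graph of any pure simplicial complex.
   Context: A simplicial complex is pure if all its inclusion-maximal faces (facets) have the same dimension. The dual graph of a pure simplicial complex $\Delta$ has a vertex for each facet of $\Delta$, and two facets are adjacent iff they share a face of dimension one less than that of the facets. *)

From mathcomp Require Import all_boot.
Set Implicit Arguments. Unset Strict Implicit. Unset Printing Implicit Defensive.

Definition simplicial_complex (V : finType) (D : {set {set V}}) : Prop :=
  forall F G : {set V}, F \in D -> G \subset F -> G \in D.

Definition facet (V : finType) (D : {set {set V}}) (F : {set V}) : Prop :=
  F \in D /\ forall G : {set V}, G \in D -> F \subset G -> G = F.

(* Dimension of a face F is #|F| - 1; pure = all facets have the same dimension. *)
Definition pure (V : finType) (D : {set {set V}}) : Prop :=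
  forall F G : {set V}, facet D F -> facet D G -> #|F| = #|G|.

(* Adjacency in the dual graph: two distinct facets sharing a face of
   dimension one less than theirs, i.e. of cardinality #|F| - 1. *)
Definition dual_adj (V : finType) (D : {set {set V}}) (F G : {set V}) : Prop :=
  F <> G /\ exists S : {set V},
    [/\ S \in D, S \subset F, S \subset G & #|S| = (#|F| - 1)%N].

Definition is_dual_graph (T : finType) (e : rel T) (V : finType)
    (D : {set {set V}}) : Prop :=
  exists f : T -> {set V},
    [/\ injective f,
        (forall x, facet D (f x)),
        (forall F, facet D F -> exists x, f x = F) &
        (forall x y, e x y <-> dual_adj D (f x) (f y))].

From mathcomp Require Import all_boot.
From mathcomp Require Import zify.
Set Implicit Arguments. Unset Strict Implicit. Unset Printing Implicit Defensive.

(* In a pure complex whose facets have d vertices, two facets are adjacent in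
   the dual graph iff they meet in d - 1 vertices.  Let A, B be adjacent
   facets and Y a common neighbour of both.  Either Y lies in A :|: B, which
   has d + 1 vertices, or Y has a vertex outside A :|: B and then Y contains
   A :&: B.  Two common neighbours of the same kind meet in at least d - 1
   vertices, hence are adjacent.  So the graph K_{1,1,3} (an edge joined to
   three independent vertices) is no dual graph: by pigeonhole two of the
   three independent vertices would be common neighbours of the same kind. *)

Section CodimensionOneIntersections.
Variable V : finType.
Implicit Types A B Y Z : {set V}.

Lemma card_setI_le_pred A B : #|A| = #|B| -> A <> B -> #|A :&: B| <= #|A| - 1.
Proof.
move=> eq_card neqAB; have : #|A :&: B| != #|A|.
  apply/negP => /eqP cardI; apply: neqAB.
  have /eqP eqIA : A :&: B == A by rewrite eqEcard subsetIl cardI leqnn.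
  by apply/eqP; rewrite eqEcard -{1}eqIA subsetIr -eq_card leqnn.
have : #|A :&: B| <= #|A| by rewrite subset_leq_card ?subsetIl.
lia.
Qed.

Lemma setI_eq_setD1 A B r :
  r \in B -> r \notin A -> #|B :&: A| = #|B| - 1 -> B :&: A = B :\ r.
Proof.
move=> rB rNA cardI; apply/eqP; rewrite eqEcard cardI (cardsD1 r B) rB /=.
rewrite add1n subSS subn0 leqnn andbT.
by apply/subsetP => z; rewrite !inE => /andP[zB zA]; rewrite zB andbT;
  apply: contraNneq rNA => <-.
Qed.

Lemma setI_subset_of_not_subsetU A B Y :
  #|A :&: B| = #|Y| - 1 -> #|Y :&: A| = #|Y| - 1 -> #|Y :&: B| = #|Y| - 1 ->
  ~~ (Y \subset A :|: B) -> A :&: B \subset Y.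
Proof.
move=> cardAB cardYA cardYB /subsetPn[r rY]; rewrite inE negb_or => /andP[rNA rNB].
have eqYA := setI_eq_setD1 rY rNA cardYA.
have eqYB := setI_eq_setD1 rY rNB cardYB.
have sub : Y :\ r \subset A :&: B by rewrite subsetI -{1}eqYA -eqYB !subsetIr.
have /eqP <- : Y :\ r == A :&: B by rewrite eqEcard sub cardAB -eqYA cardYA leqnn.
exact: subsetDl.
Qed.

Lemma card_setI_of_subsetU (d : nat) A B Y Z :
  #|A| = d -> #|B| = d -> #|Y| = d -> #|Z| = d -> #|A :&: B| = d - 1 ->
  Y \subset A :|: B -> Z \subset A :|: B -> d - 1 <= #|Y :&: Z|.
Proof.
move=> cA cB cY cZ cAB sY sZ.
have cUAB := cardsUI A B; have cUYZ := cardsUI Y Z.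
have : #|Y :|: Z| <= #|A :|: B| by rewrite subset_leq_card // subUset sY sZ.
lia.
Qed.

Lemma common_neighbours_card_setI (d : nat) A B Y Z :
  #|A| = d -> #|B| = d -> #|Y| = d -> #|Z| = d -> #|A :&: B| = d - 1 ->
  #|Y :&: A| = d - 1 -> #|Y :&: B| = d - 1 ->
  #|Z :&: A| = d - 1 -> #|Z :&: B| = d - 1 ->
  Y <> Z -> (Y \subset A :|: B) = (Z \subset A :|: B) -> #|Y :&: Z| = d - 1.
Proof.
move=> cA cB cY cZ cAB cYA cYB cZA cZB neqYZ same_side.
apply/eqP; rewrite eqn_leq -{1}cY card_setI_le_pred ?cY ?cZ //=.
case sYU: (Y \subset A :|: B).
  by apply: (card_setI_of_subsetU cA cB cY cZ cAB); rewrite -?same_side.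
rewrite -cAB subset_leq_card // subsetI.
by rewrite !setI_subset_of_not_subsetU ?cY ?cZ ?sYU -?same_side ?sYU.
Qed.

End CodimensionOneIntersections.

Section PureDualGraph.
Variables (V : finType) (D : {set {set V}}).
Hypotheses (D_complex : simplicial_complex D) (D_pure : pure D).

Lemma dual_adj_facetsE A B : facet D A -> facet D B ->
  dual_adj D A B <-> A <> B /\ #|A :&: B| = #|A| - 1.
Proof.
move=> fA fB; have eq_card := D_pure fA fB; split.
- move=> [neqAB [S [_ sA sB cardS]]]; split => //.
  apply/eqP; rewrite eqn_leq card_setI_le_pred //= -cardS.
  by rewrite subset_leq_card // subsetI sA sB.
- move=> [neqAB cardI]; split => //; exists (A :&: B).
  by split; rewrite ?subsetIl ?subsetIr //; apply: D_complex fA.1 _; rewrite subsetIl.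
Qed.

Lemma dual_adj_common_neighbours A B Y Z :
  facet D A -> facet D B -> facet D Y -> facet D Z -> dual_adj D A B ->
  dual_adj D Y A -> dual_adj D Y B -> dual_adj D Z A -> dual_adj D Z B ->
  Y <> Z -> (Y \subset A :|: B) = (Z \subset A :|: B) -> dual_adj D Y Z.
Proof.
move=> fA fB fY fZ /(dual_adj_facetsE fA fB)[_ cAB]
  /(dual_adj_facetsE fY fA)[_ cYA] /(dual_adj_facetsE fY fB)[_ cYB]
  /(dual_adj_facetsE fZ fA)[_ cZA] /(dual_adj_facetsE fZ fB)[_ cZB] neqYZ same_side.
apply/(dual_adj_facetsE fY fZ); split => //.
rewrite (D_pure fY fA) in cYA cYB *; rewrite (D_pure fZ fA) in cZA cZB.
exact: (common_neighbours_card_setI erefl (D_pure fB fA) (D_pure fY fA)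
  (D_pure fZ fA) cAB cYA cYB cZA cZB neqYZ same_side).
Qed.

End PureDualGraph.

Definition K113 : rel 'I_5 := fun i j => (i != j) && ((i < 2) || (j < 2)).

Lemma K113_sym : symmetric K113.
Proof. by move=> i j; rewrite /K113 eq_sym orbC. Qed.

Lemma K113_irr : irreflexive K113.
Proof. by move=> i; rewrite /K113 eqxx. Qed.

Lemma K113_not_pure_dual_graph (V : finType) (D : {set {set V}}) :
  simplicial_complex D -> pure D -> ~ is_dual_graph K113 D.
Proof.
move=> D_complex D_pure [f [f_inj f_facet _ f_adj]].
pose a := @Ordinal 5 0 isT; pose b := @Ordinal 5 1 isT.
have adj_small (k l : 'I_5) : k != l -> l < 2 -> dual_adj D (f k) (f l).
  by move=> neq_kl l2; apply/f_adj; rewrite /K113 neq_kl l2 orbT.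
have adj_high (k l : 'I_5) : 2 <= k -> l < 2 -> dual_adj D (f k) (f l).
  move=> k2 l2; apply: (adj_small _ _ _ l2).
  by apply: contraTneq k2 => ->; rewrite -ltnNge.
have distinct_sides (i j : 'I_5) : 2 <= i -> 2 <= j -> i != j ->
    (f i \subset f a :|: f b) != (f j \subset f a :|: f b).
  move=> i2 j2 neq_ij; apply/negP => /eqP same_side.
  have /f_adj : dual_adj D (f i) (f j).
    apply: (dual_adj_common_neighbours D_complex D_pure (f_facet a) (f_facet b)
      (f_facet i) (f_facet j) (adj_small a b isT isT) (adj_high i a i2 isT)
      (adj_high i b i2 isT) (adj_high j a j2 isT) (adj_high j b j2 isT) _ same_side).
    by move=> /f_inj eq_ij; rewrite eq_ij eqxx in neq_ij.
  by rewrite /K113 neq_ij ltnNge i2 ltnNge j2.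
have := distinct_sides (@Ordinal 5 2 isT) (@Ordinal 5 3 isT) isT isT isT.
have := distinct_sides (@Ordinal 5 2 isT) (@Ordinal 5 4 isT) isT isT isT.
have := distinct_sides (@Ordinal 5 3 isT) (@Ordinal 5 4 isT) isT isT isT.
by do 3!case: (_ \subset _).
Qed.

Theorem corollary4p2 :
  exists (T : finType) (e : rel T),
    [/\ symmetric e, irreflexive e &
        forall (V : finType) (D : {set {set V}}),
          simplicial_complex D -> pure D -> ~ is_dual_graph e D].
Proof.
exists ('I_5 : finType), K113; split.
- exact: K113_sym.
- exact: K113_irr.
- exact: K113_not_pure_dual_graph.
Qed.
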